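(* Let $b>1$, $g_0(t)=b^j$ for $j<t\leq j+1$ ($j\in\mathbb{N}_0$), $\lambda_b=\left(\arccos\frac1{R_b}\right)^2$ with $R_b=\frac{b^{1/2}+b^{-1/2}}2$. Let $\omega$ be a nonzero function on $\mathbb{R}_+$ with $\omega(0)>0$ satisfying in the distributional sense $-(g_0\omega')'=\lambda_bg_0\omega$ together with $\omega'(0)=0$, $\omega(j+)=\omega(j-)$ and $\omega'(j-)=b\,\omega'(j+)$ for all $j\in\mathbb{N}$. Then there exist constants $0<C_1<C_2<\infty$ such that \[ C_1\frac{1+t}{\sqrt{g_0(t)}}\leq\omega(t)\leq C_2\frac{1+t}{\sqrt{g_0(t)}},\qquad t\geq0. \] *)

From Stdlib Require Export Reals.
From Coquelicot Require Export Coquelicot.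
Open Scope R_scope.

(* g_0(t) = b^j for j < t <= j+1 (j in N_0); floor1 t is the integer j with
   j < t <= j+1.  At t = 0 (not covered by the paper's formula) we set
   g_0(0) = 1 = b^0, the right limit. *)
Definition g0 (b t : R) : R :=
  if Rle_dec t 0 then 1 else b ^ (Z.to_nat (floor1 t)).

Definition R_b (b : R) : R := (sqrt b + / sqrt b) / 2.

Definition lambda_b (b : R) : R := (acos (/ R_b b)) ^ 2.

(* On each interval (j, j + 1) the equation reads omega'' = - th^2 omega with
   th = arccos (1 / R_b), so omega is a sinusoid there, and an energy argument
   shows that it is determined by its right limits at j.  With sg = sqrt b one has
   cos th = 2 sg / (sg^2 + 1) and sin th = (sg^2 - 1) / (sg^2 + 1), and the matching
   conditions at the integers are solved in closed form: on (j, j + 1],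
     omega t / omega 0 = sg^-j ((1 + j sin th) cos (th (t - j)) - (j sin th / sg) sin (th (t - j))).
   Because sg cos th = 1 + sin th, the bracket lies between (1 + j) sin th / sg and 1 + j,
   while sqrt (g0 t) = sg^j. *)

From Stdlib Require Import Reals Lra Psatz ZArith Lia.
From Coquelicot Require Import Coquelicot.
Open Scope R_scope.

Lemma filterlim_Rminus {T : Type} (F : (T -> Prop) -> Prop) {FF : Filter F}
    (f g : T -> R) (a b : R) :
  filterlim f F (locally a) -> filterlim g F (locally b) ->
  filterlim (fun x => f x - g x) F (locally (a - b)).
Proof.
  intros Hf Hg.
  apply (filterlim_comp_2 (H := locally (opp b)) f (fun x => opp (g x)) plus Hf).
  - eapply filterlim_comp; [exact Hg | exact (filterlim_opp b)].
  - exact (filterlim_plus a (opp b)).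
Qed.

Lemma filterlim_Rmult {T : Type} (F : (T -> Prop) -> Prop) {FF : Filter F}
    (f g : T -> R) (a b : R) :
  filterlim f F (locally a) -> filterlim g F (locally b) ->
  filterlim (fun x => f x * g x) F (locally (a * b)).
Proof.
  intros Hf Hg.
  exact (filterlim_comp_2 f g mult Hf Hg (filterlim_mult (K := R_AbsRing) a b)).
Qed.

Lemma filterlim_Rplus {T : Type} (F : (T -> Prop) -> Prop) {FF : Filter F}
    (f g : T -> R) (a b : R) :
  filterlim f F (locally a) -> filterlim g F (locally b) ->
  filterlim (fun x => f x + g x) F (locally (a + b)).
Proof.
  intros Hf Hg. exact (filterlim_comp_2 f g plus Hf Hg (filterlim_plus a b)).
Qed.

Lemma is_derive_continuous (f : R -> R) (x l : R) : is_derive f x l -> continuous f x.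
Proof.
  intros Hf. apply (ex_derive_continuous (K := R_AbsRing) (V := R_NormedModule)).
  now exists l.
Qed.

Lemma continuous_at_right (f : R -> R) (x : R) :
  continuous f x -> filterlim f (at_right x) (locally (f x)).
Proof. apply filterlim_filter_le_1, filter_le_within. Qed.

Lemma continuous_at_left (f : R -> R) (x : R) :
  continuous f x -> filterlim f (at_left x) (locally (f x)).
Proof. apply filterlim_filter_le_1, filter_le_within. Qed.

Lemma at_right_interval (lo hi : R) : lo < hi -> at_right lo (fun x => lo < x < hi).
Proof.
  intros Hlh. exists (mkposreal (hi - lo) ltac:(lra)).
  intros y Hy Hly. apply Rabs_lt_between' in Hy. simpl in Hy. lra.
Qed.

Lemma at_left_interval (lo hi : R) : lo < hi -> at_left hi (fun x => lo < x < hi).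
Proof.
  intros Hlh. exists (mkposreal (hi - lo) ltac:(lra)).
  intros y Hy Hyh. apply Rabs_lt_between' in Hy. simpl in Hy. lra.
Qed.

Lemma at_left_limit_eq (lo hi l : R) (f g : R -> R) :
  lo < hi -> (forall t, lo < t < hi -> f t = g t) -> continuous g hi ->
  filterlim f (at_left hi) (locally l) -> l = g hi.
Proof.
  intros Hlh Heq Hg Hf.
  apply (filterlim_locally_unique (F := at_left hi) f); [exact Hf|].
  apply filterlim_ext_loc with g; [|exact (continuous_at_left g hi Hg)].
  apply filter_imp with (2 := at_left_interval lo hi Hlh).
  intros t Ht. symmetry. exact (Heq t Ht).
Qed.

Section OdeUniqueness.

Variables (k lo hi : R) (w p dp : R -> R).
Hypothesis k_pos : 0 < k.
Hypothesis w_ode : forall t, lo < t < hi ->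
  ex_derive w t /\ ex_derive (Derive w) t /\ Derive (Derive w) t = - k * w t.
Hypothesis p_derive : forall t, is_derive p t (dp t).
Hypothesis dp_derive : forall t, is_derive dp t (- k * p t).

Definition ode_energy (x : R) : R :=
  k * ((w x - p x) * (w x - p x)) + (Derive w x - dp x) * (Derive w x - dp x).

Lemma ode_energy_derive x : lo < x < hi -> is_derive ode_energy x 0.
Proof.
  intros Hx. destruct (w_ode x Hx) as [Hw [Hw' Hw'']].
  apply Derive_correct in Hw. apply Derive_correct in Hw'. rewrite Hw'' in Hw'.
  pose proof (is_derive_minus _ _ _ _ _ Hw (p_derive x)) as Hd.
  pose proof (is_derive_minus _ _ _ _ _ Hw' (dp_derive x)) as Hd'.
  pose proof (is_derive_plus _ _ _ _ _
    (is_derive_scal _ _ k _ (is_derive_mult _ _ _ _ _ Hd Hd Rmult_comm))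
    (is_derive_mult _ _ _ _ _ Hd' Hd' Rmult_comm)) as HE.
  match type of HE with is_derive _ _ ?l => replace 0 with l; [exact HE|] end.
  unfold plus, scal, mult, minus, opp; simpl; unfold plus; simpl; ring.
Qed.

Lemma ode_energy_const x y : lo < x -> x <= y -> y < hi -> ode_energy x = ode_energy y.
Proof.
  intros Hx Hxy Hy. destruct (Req_dec x y) as [<-|Hne]; [reflexivity|].
  apply (eq_is_derive ode_energy); [|lra].
  intros t Ht. apply ode_energy_derive. lra.
Qed.

Lemma ode_energy_at_right :
  filterlim w (at_right lo) (locally (p lo)) ->
  filterlim (Derive w) (at_right lo) (locally (dp lo)) ->
  filterlim ode_energy (at_right lo) (locally 0).
Proof.
  intros Hw Hw'.
  assert (Hp : filterlim p (at_right lo) (locally (p lo))).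
  { exact (continuous_at_right p lo (is_derive_continuous _ _ _ (p_derive lo))). }
  assert (Hdp : filterlim dp (at_right lo) (locally (dp lo))).
  { exact (continuous_at_right dp lo (is_derive_continuous _ _ _ (dp_derive lo))). }
  pose proof (filterlim_Rminus _ _ _ _ _ Hw Hp) as Hd.
  pose proof (filterlim_Rminus _ _ _ _ _ Hw' Hdp) as Hd'.
  rewrite Rminus_diag in Hd, Hd'.
  pose proof (filterlim_Rmult _ _ _ _ _ (filterlim_const k)
                (filterlim_Rmult _ _ _ _ _ Hd Hd)) as Hsq.
  pose proof (filterlim_Rplus _ _ _ _ _ Hsq (filterlim_Rmult _ _ _ _ _ Hd' Hd')) as HE.
  rewrite !Rmult_0_r, Rplus_0_r in HE. exact HE.
Qed.

Lemma ode_solution_unique :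
  filterlim w (at_right lo) (locally (p lo)) ->
  filterlim (Derive w) (at_right lo) (locally (dp lo)) ->
  forall t, lo < t < hi -> w t = p t /\ Derive w t = dp t.
Proof.
  intros Hw Hw' t Ht.
  assert (Hzero : ode_energy t = 0).
  { apply (filterlim_locally_unique (F := at_right lo) ode_energy).
    - apply filterlim_ext_loc with (fun _ => ode_energy t); [|apply filterlim_const].
      apply filter_imp with (2 := at_right_interval lo t ltac:(lra)).
      intros x Hx. symmetry. apply ode_energy_const; lra.
    - exact (ode_energy_at_right Hw Hw'). }
  unfold ode_energy in Hzero.
  pose proof (Rle_0_sqr (w t - p t)) as Hsq.
  pose proof (Rle_0_sqr (Derive w t - dp t)) as Hsq'.
  unfold Rsqr in Hsq, Hsq'.
  assert (H0 : (w t - p t) * (w t - p t) = 0) by nra.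
  assert (H0' : (Derive w t - dp t) * (Derive w t - dp t) = 0) by nra.
  apply Rsqr_0_uniq in H0, H0'. split; lra.
Qed.

End OdeUniqueness.

Definition harmonic (th A B t0 t : R) : R :=
  A * cos (th * (t - t0)) + B * sin (th * (t - t0)).

Lemma harmonic_at_origin th A B t0 : harmonic th A B t0 t0 = A.
Proof. unfold harmonic. rewrite Rminus_diag, Rmult_0_r, cos_0, sin_0. ring. Qed.

Lemma harmonic_scale th c A B t0 t :
  harmonic th (c * A) (c * B) t0 t = c * harmonic th A B t0 t.
Proof. unfold harmonic. ring. Qed.

Lemma is_derive_harmonic th A B t0 t :
  is_derive (harmonic th A B t0) t (th * harmonic th B (- A) t0 t).
Proof. unfold harmonic. auto_derive; [easy|]. unfold Rminus. ring. Qed.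

Lemma is_derive_harmonic' th A B t0 t :
  is_derive (fun t => th * harmonic th B (- A) t0 t) t (- th ^ 2 * harmonic th A B t0 t).
Proof. unfold harmonic. auto_derive; [easy|]. unfold Rminus. ring. Qed.

Lemma harmonic_unique (th lo hi A B : R) (w : R -> R) :
  0 < th ->
  (forall t, lo < t < hi ->
     ex_derive w t /\ ex_derive (Derive w) t /\ Derive (Derive w) t = - th ^ 2 * w t) ->
  filterlim w (at_right lo) (locally A) ->
  filterlim (Derive w) (at_right lo) (locally (th * B)) ->
  forall t, lo < t < hi ->
    w t = harmonic th A B lo t /\ Derive w t = th * harmonic th B (- A) lo t.
Proof.
  intros Hth Hode Hw Hw'.
  apply (ode_solution_unique (th ^ 2) lo hi w (harmonic th A B lo)); try assumption.
  - now apply pow_lt.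
  - intros t. apply is_derive_harmonic.
  - intros t. apply is_derive_harmonic'.
  - now rewrite harmonic_at_origin.
  - now rewrite harmonic_at_origin.
Qed.

Lemma continuous_harmonic th A B t0 t : continuous (harmonic th A B t0) t.
Proof. exact (is_derive_continuous _ _ _ (is_derive_harmonic th A B t0 t)). Qed.

Definition cos_angle (sg : R) : R := 2 * sg / (sg ^ 2 + 1).
Definition sin_angle (sg : R) : R := (sg ^ 2 - 1) / (sg ^ 2 + 1).

Lemma inv_R_b b : 0 < b -> / R_b b = cos_angle (sqrt b).
Proof.
  intros Hb. pose proof (sqrt_lt_R0 b Hb) as Hs.
  unfold R_b, cos_angle. field. nra.
Qed.

Lemma cos_angle_bounds sg : 1 < sg -> 0 < cos_angle sg < 1.
Proof.
  intros Hsg. unfold cos_angle. split.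
  - apply Rdiv_lt_0_compat; nra.
  - apply Rmult_lt_reg_r with (sg ^ 2 + 1); [nra|]. field_simplify; nra.
Qed.

Lemma sin_angle_bounds sg : 1 < sg -> 0 < sin_angle sg < 1.
Proof.
  intros Hsg. unfold sin_angle. split.
  - apply Rdiv_lt_0_compat; nra.
  - apply Rmult_lt_reg_r with (sg ^ 2 + 1); [nra|]. field_simplify; nra.
Qed.

Lemma cos_acos_angle sg : 1 < sg -> cos (acos (cos_angle sg)) = cos_angle sg.
Proof. intros Hsg. pose proof (cos_angle_bounds sg Hsg). apply cos_acos. lra. Qed.

Lemma sin_acos_angle sg : 1 < sg -> sin (acos (cos_angle sg)) = sin_angle sg.
Proof.
  intros Hsg. pose proof (cos_angle_bounds sg Hsg). pose proof (sin_angle_bounds sg Hsg).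
  rewrite sin_acos by lra.
  replace (1 - (cos_angle sg)²) with (sin_angle sg)²; [apply sqrt_Rsqr; lra|].
  unfold Rsqr, cos_angle, sin_angle. field. nra.
Qed.

Lemma acos_angle_bounds sg : 1 < sg -> 0 < acos (cos_angle sg) <= PI / 2.
Proof.
  intros Hsg. pose proof (cos_angle_bounds sg Hsg) as Hc.
  pose proof (cos_acos_angle sg Hsg) as Hcos. pose proof (acos_bound (cos_angle sg)).
  split.
  - destruct (Req_dec (acos (cos_angle sg)) 0) as [E|]; [|lra].
    rewrite E, cos_0 in Hcos. lra.
  - destruct (Rle_dec (acos (cos_angle sg)) (PI / 2)) as [|Hgt]; [assumption|].
    assert (cos (acos (cos_angle sg)) < 0) by (apply cos_lt_0; lra). lra.
Qed.

Lemma cos_sin_scaled_bounds th x :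
  0 <= th <= PI / 2 -> 0 <= x <= 1 ->
  cos th <= cos (th * x) <= 1 /\ 0 <= sin (th * x) <= sin th.
Proof.
  intros Hth Hx. pose proof PI_RGT_0.
  assert (th * x <= th) by nra. assert (0 <= th * x) by nra.
  split; split.
  - apply cos_decr_1; lra.
  - apply COS_bound.
  - apply sin_ge_0; lra.
  - apply sin_incr_1; lra.
Qed.

Lemma piece_profile_bounds sg J c s :
  1 < sg -> 0 <= J -> cos_angle sg <= c <= 1 -> 0 <= s <= sin_angle sg ->
  (1 + J) * (sin_angle sg / sg) <= (1 + J * sin_angle sg) * c - J * sin_angle sg / sg * s
  <= 1 + J.
Proof.
  intros Hsg HJ Hc Hs. pose proof (sin_angle_bounds sg Hsg).
  assert (HJs : 0 <= J * sin_angle sg / sg) by (apply Rdiv_le_0_compat; nra).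
  assert (Hcos : cos_angle sg = 1 / sg + sin_angle sg / sg).
  { unfold cos_angle, sin_angle. field. nra. }
  assert (Hinv : 0 < 1 / sg) by (apply Rdiv_lt_0_compat; lra).
  split.
  - assert ((1 + J * sin_angle sg) * cos_angle sg <= (1 + J * sin_angle sg) * c)
      by (apply Rmult_le_compat_l; nra).
    assert (J * sin_angle sg / sg * s <= J * sin_angle sg / sg * sin_angle sg)
      by (apply Rmult_le_compat_l; lra).
    rewrite Hcos in *. unfold Rdiv in *. nra.
  - assert (0 <= J * sin_angle sg / sg * s) by (apply Rmult_le_pos; lra).
    assert (J * sin_angle sg <= J) by nra.
    assert ((1 + J * sin_angle sg) * c <= 1 + J * sin_angle sg) by nra.
    lra.
Qed.

(* Cosine and sine amplitudes of [omega / omega 0] on the piece [(j, j + 1]]. *)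
Definition amp_cos (sg : R) (j : nat) : R := (1 + INR j * sin_angle sg) / sg ^ j.
Definition amp_sin (sg : R) (j : nat) : R := - (INR j * sin_angle sg) / sg ^ S j.

Section Amplitudes.

Variables (sg th : R).
Hypothesis sg_gt1 : 1 < sg.
Hypothesis cos_th : cos th = cos_angle sg.
Hypothesis sin_th : sin th = sin_angle sg.

Lemma amp_cos0 : amp_cos sg 0 = 1.
Proof. unfold amp_cos. simpl. field. Qed.

Lemma amp_sin0 : amp_sin sg 0 = 0.
Proof. unfold amp_sin. simpl. field. lra. Qed.

Lemma harmonic_amp_continuity j :
  harmonic th (amp_cos sg j) (amp_sin sg j) (INR j) (INR j + 1) = amp_cos sg (S j).
Proof.
  unfold harmonic, amp_cos, amp_sin, cos_angle, sin_angle in *.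
  replace (th * (INR j + 1 - INR j)) with th by ring.
  rewrite cos_th, sin_th, S_INR. simpl.
  field. repeat split; try nra. apply pow_nonzero. lra.
Qed.

Lemma harmonic_amp_jump j :
  harmonic th (amp_sin sg j) (- amp_cos sg j) (INR j) (INR j + 1) = sg ^ 2 * amp_sin sg (S j).
Proof.
  unfold harmonic, amp_cos, amp_sin, cos_angle, sin_angle in *.
  replace (th * (INR j + 1 - INR j)) with th by ring.
  rewrite cos_th, sin_th, S_INR. simpl.
  field. repeat split; try nra. apply pow_nonzero. lra.
Qed.

Lemma harmonic_amp_eq n t :
  sg ^ n * harmonic th (amp_cos sg n) (amp_sin sg n) (INR n) t
  = (1 + INR n * sin_angle sg) * cos (th * (t - INR n))
    - INR n * sin_angle sg / sg * sin (th * (t - INR n)).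
Proof.
  unfold harmonic, amp_cos, amp_sin. simpl.
  field. split; [lra|]. apply pow_nonzero. lra.
Qed.

Lemma harmonic_amp_bounds n t :
  0 <= th <= PI / 2 -> INR n <= t <= INR n + 1 ->
  sin_angle sg / (2 * sg) * (1 + t)
    <= sg ^ n * harmonic th (amp_cos sg n) (amp_sin sg n) (INR n) t <= 1 + t.
Proof.
  intros Hth Ht. rewrite harmonic_amp_eq.
  pose proof (sin_angle_bounds sg sg_gt1). pose proof (pos_INR n).
  destruct (cos_sin_scaled_bounds th (t - INR n) Hth ltac:(lra)) as [Hc Hs].
  rewrite cos_th in Hc. rewrite sin_th in Hs.
  destruct (piece_profile_bounds sg _ _ _ sg_gt1 (pos_INR n) Hc Hs) as [Hlo Hhi].
  split; [|lra].
  apply Rle_trans with ((1 + INR n) * (sin_angle sg / sg)); [|exact Hlo].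
  replace (sin_angle sg / (2 * sg) * (1 + t)) with (sin_angle sg / sg * ((1 + t) / 2))
    by (field; lra).
  rewrite Rmult_comm. apply Rmult_le_compat_r; [apply Rdiv_le_0_compat|]; lra.
Qed.

End Amplitudes.

(* The [j] with [j < t <= j + 1] for [t > 0]; junk value [0] for [t <= 0]. *)
Definition piece_index (t : R) : nat := Z.to_nat (floor1 t).

Lemma piece_index_spec t : 0 < t -> INR (piece_index t) < t <= INR (piece_index t) + 1.
Proof.
  intros Ht. unfold piece_index, floor1. destruct (floor1_ex t) as [z Hz]. simpl.
  assert (Hz0 : (0 <= z)%Z) by (assert (-1 < z)%Z by (apply lt_IZR; simpl; lra); lia).
  rewrite INR_IZR_INZ, Z2Nat.id by exact Hz0. exact Hz.
Qed.

Lemma piece_index0 : piece_index 0 = 0%nat.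
Proof.
  unfold piece_index, floor1. destruct (floor1_ex 0) as [z Hz]. simpl.
  assert (Hz0 : (z < 0)%Z) by (apply lt_IZR; lra).
  destruct z; [lia| |reflexivity]. lia.
Qed.

Lemma piece_index_bounds t : 0 <= t -> INR (piece_index t) <= t <= INR (piece_index t) + 1.
Proof.
  intros Ht. destruct (Req_dec t 0) as [->|Hne].
  - rewrite piece_index0. simpl. lra.
  - pose proof (piece_index_spec t ltac:(lra)). lra.
Qed.

Lemma g0_piece_index b t : 0 <= t -> g0 b t = b ^ piece_index t.
Proof.
  intros Ht. unfold g0. destruct (Rle_dec t 0) as [Hle|Hgt]; [|reflexivity].
  replace t with 0 by lra. now rewrite piece_index0.
Qed.

Section PiecewiseSolution.

Variables (sg th : R) (omega : R -> R).
Hypothesis sg_gt1 : 1 < sg.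
Hypothesis th_pos : 0 < th.
Hypothesis th_le : th <= PI / 2.
Hypothesis cos_th : cos th = cos_angle sg.
Hypothesis sin_th : sin th = sin_angle sg.
Hypothesis omega_ode : forall (j : nat) (t : R), INR j < t < INR j + 1 ->
  ex_derive omega t /\ ex_derive (Derive omega) t /\
  Derive (Derive omega) t = - th ^ 2 * omega t.
Hypothesis omega0_pos : 0 < omega 0.
Hypothesis omega_at_right0 : filterlim omega (at_right 0) (locally (omega 0)).
Hypothesis omega_continuous : forall t, 0 < t -> continuous omega t.
Hypothesis omega'_at_right0 : filterlim (Derive omega) (at_right 0) (locally 0).
Hypothesis omega'_jump : forall j : nat, (1 <= j)%nat -> exists l : R,
  filterlim (Derive omega) (at_right (INR j)) (locally l) /\
  filterlim (Derive omega) (at_left (INR j)) (locally (sg ^ 2 * l)).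

Definition omega_right_limits (j : nat) : Prop :=
  filterlim omega (at_right (INR j)) (locally (omega 0 * amp_cos sg j)) /\
  filterlim (Derive omega) (at_right (INR j)) (locally (th * (omega 0 * amp_sin sg j))).

Lemma omega_on_piece j : omega_right_limits j -> forall t, INR j < t < INR j + 1 ->
  omega t = omega 0 * harmonic th (amp_cos sg j) (amp_sin sg j) (INR j) t /\
  Derive omega t = th * (omega 0 * harmonic th (amp_sin sg j) (- amp_cos sg j) (INR j) t).
Proof.
  intros [Hw Hw'] t Ht.
  rewrite <- !(harmonic_scale th (omega 0)), <- Ropp_mult_distr_r.
  exact (harmonic_unique th (INR j) (INR j + 1) _ _ omega th_pos (omega_ode j) Hw Hw' t Ht).
Qed.

Lemma omega_at_piece_end j : omega_right_limits j -> omega (INR j + 1) = omega 0 * amp_cos sg (S j).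
Proof.
  intros Hj.
  rewrite <- (harmonic_amp_continuity sg th sg_gt1 cos_th sin_th j), <- harmonic_scale.
  apply (at_left_limit_eq (INR j) (INR j + 1) _ omega); [lra| |..].
  - intros t Ht. rewrite harmonic_scale. exact (proj1 (omega_on_piece j Hj t Ht)).
  - apply continuous_harmonic.
  - apply continuous_at_left, omega_continuous. pose proof (pos_INR j). lra.
Qed.

Lemma omega_right_limits_succ j : omega_right_limits j -> omega_right_limits (S j).
Proof.
  intros Hj. split.
  - rewrite <- omega_at_piece_end, S_INR by exact Hj.
    apply continuous_at_right, omega_continuous. pose proof (pos_INR j). lra.
  - destruct (omega'_jump (S j)) as [l [Hr Hl]]; [lia|].
    rewrite S_INR in Hl.
    assert (Hjump : sg ^ 2 * l = th * (omega 0 * (sg ^ 2 * amp_sin sg (S j)))).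
    { rewrite <- (harmonic_amp_jump sg th sg_gt1 cos_th sin_th j).
      rewrite <- !harmonic_scale.
      apply (at_left_limit_eq (INR j) (INR j + 1) _ (Derive omega)); [lra| |..].
      - intros t Ht. rewrite !harmonic_scale. exact (proj2 (omega_on_piece j Hj t Ht)).
      - apply continuous_harmonic.
      - exact Hl. }
    replace (th * (omega 0 * amp_sin sg (S j))) with l; [exact Hr|].
    apply Rmult_eq_reg_l with (sg ^ 2); [|apply pow_nonzero; lra].
    rewrite Hjump. ring.
Qed.

Lemma omega_right_limits_all j : omega_right_limits j.
Proof.
  induction j as [|j IH]; [|exact (omega_right_limits_succ j IH)].
  unfold omega_right_limits. rewrite amp_cos0, amp_sin0, Rmult_1_r, !Rmult_0_r by lra.
  split; assumption.
Qed.

Lemma omega_on_closed_piece j t : INR j < t <= INR j + 1 ->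
  omega t = omega 0 * harmonic th (amp_cos sg j) (amp_sin sg j) (INR j) t.
Proof.
  intros Ht. destruct (Req_dec t (INR j + 1)) as [->|Hne].
  - rewrite (harmonic_amp_continuity sg th sg_gt1 cos_th sin_th j).
    exact (omega_at_piece_end j (omega_right_limits_all j)).
  - apply (omega_on_piece j (omega_right_limits_all j)). lra.
Qed.

Lemma omega_eq_harmonic t : 0 <= t ->
  omega t = omega 0 * harmonic th (amp_cos sg (piece_index t)) (amp_sin sg (piece_index t))
                        (INR (piece_index t)) t.
Proof.
  intros Ht. destruct (Req_dec t 0) as [->|Hne].
  - rewrite piece_index0, harmonic_at_origin, amp_cos0. ring.
  - apply omega_on_closed_piece, piece_index_spec. lra.
Qed.

Lemma omega_bounds t : 0 <= t ->
  omega 0 * sin_angle sg / (2 * sg) * (1 + t) / sg ^ piece_index t <= omega t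
  <= omega 0 * (1 + t) / sg ^ piece_index t.
Proof.
  intros Ht. rewrite (omega_eq_harmonic t Ht).
  set (n := piece_index t).
  destruct (harmonic_amp_bounds sg th sg_gt1 cos_th sin_th n t ltac:(lra)
              (piece_index_bounds t Ht)) as [Hlo Hhi].
  assert (Hpow : 0 < sg ^ n) by (apply pow_lt; lra).
  set (h := harmonic th (amp_cos sg n) (amp_sin sg n) (INR n) t) in *.
  replace (omega 0 * h) with (omega 0 * (sg ^ n * h) / sg ^ n) by (field; lra).
  replace (omega 0 * sin_angle sg / (2 * sg) * (1 + t))
    with (omega 0 * (sin_angle sg / (2 * sg) * (1 + t))) by (field; lra).
  pose proof (Rlt_le _ _ (Rinv_0_lt_compat _ Hpow)) as Hinv.
  split; apply (Rmult_le_compat_r _ _ _ Hinv), Rmult_le_compat_l; lra.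
Qed.

End PiecewiseSolution.

Lemma sqrt_pow x n : 0 <= x -> sqrt (x ^ n) = sqrt x ^ n.
Proof.
  intros Hx. rewrite <- (pow2_sqrt x) at 1 by exact Hx.
  rewrite <- pow_mult, Nat.mul_comm, pow_mult.
  apply sqrt_pow2, pow_le, sqrt_pos.
Qed.

Theorem lemma4p2 (b : R) (omega : R -> R) :
  1 < b ->
  (exists t, 0 <= t /\ omega t <> 0) ->
  0 < omega 0 ->
  (forall (j : nat) (t : R), INR j < t < INR j + 1 ->
     ex_derive omega t /\ ex_derive (Derive omega) t /\
     Derive (Derive omega) t = - lambda_b b * omega t) ->
  filterlim omega (at_right 0) (locally (omega 0)) ->
  (forall t, 0 < t -> continuous omega t) ->
  filterlim (Derive omega) (at_right 0) (locally 0) ->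
  (forall j : nat, (1 <= j)%nat -> exists l : R,
     filterlim (Derive omega) (at_right (INR j)) (locally l) /\
     filterlim (Derive omega) (at_left (INR j)) (locally (b * l))) ->
  exists C1 C2 : R, 0 < C1 /\ C1 < C2 /\
    forall t : R, 0 <= t ->
      C1 * (1 + t) / sqrt (g0 b t) <= omega t /\
      omega t <= C2 * (1 + t) / sqrt (g0 b t).
Proof.
  intros Hb _ Hw0 Hode Hw Hcont Hw' Hjump.
  set (sg := sqrt b). set (th := acos (cos_angle sg)).
  assert (Hsg : 1 < sg) by (unfold sg; rewrite <- sqrt_1; apply sqrt_lt_1_alt; lra).
  assert (Hlambda : lambda_b b = th ^ 2).
  { unfold lambda_b, th, sg. now rewrite inv_R_b by lra. }
  rewrite Hlambda in Hode. rewrite <- (pow2_sqrt b) in Hjump by lra.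
  pose proof (acos_angle_bounds sg Hsg) as Hth.
  pose proof (sin_angle_bounds sg Hsg) as Hsin.
  exists (omega 0 * sin_angle sg / (2 * sg)), (omega 0).
  split; [apply Rdiv_lt_0_compat; nra|]. split.
  { apply Rmult_lt_reg_r with (2 * sg); [lra|]. field_simplify; nra. }
  intros t Ht. rewrite g0_piece_index, sqrt_pow by lra.
  exact (omega_bounds sg th omega Hsg (proj1 Hth) (proj2 Hth)
           (cos_acos_angle sg Hsg) (sin_acos_angle sg Hsg) Hode Hw0 Hw Hcont Hw' Hjump t Ht).
Qed.
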